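(* For every linkage $\mathcal L$, $$\mathrm{NCConf}_0(\mathcal L)=\bigcap_{n=1}^\infty \overline{\mathrm{Annot}_{\mathcal L}(\mathrm{NConf}_{1/n}(\mathcal L))},$$ where the bar denotes topological closure in $(\mathbb R^2)^V\times\mathbb R^{E\times E}$. In particular, replacing $1$ by any $\epsilon>0$ in the definition of $\mathrm{NCConf}_0(\mathcal L)$ gives the same set.
   Context: A linkage is a pair $\mathcal L=(G,\ell)$ with $G=(V,E)$ a finite graph and $\ell:E\to\mathbb R_{\ge0}$ (edges are bars; zero lengths allowed). A configuration is a map $C:V\to\mathbb R^2$ with $|C(v)-C(w)|=\ell(v,w)$ for every bar; $\mathrm{Conf}_0(\mathcal L)$ is the set of configurations. Two linkages $(G_1,\ell_1),(G_2,\ell_2)$ are $\epsilon$-related if $G_1=G_2$ and $|\ell_1(e)-\ell_2(e)|\le\epsilon$ for all $e$. A configuration $C$ of a linkage $\mathcal L'=(G,\ell')$ is nontouching if no two bars intersect except at endpoints, and two vertices have the same position iff they are joined in $G$ by a path of bars of $\ell'$-length zero (such vertices are regarded as merged). $\mathrm{NConf}_\epsilon(\mathcal L)$ is the set of nontouching configurations of linkages $\epsilon$-related to $\mathcal L$. Order function: for oriented segments $e_1,e_2$, in coordinates where $e_1$ runs from $(0,0)$ to $(l,0)$, let $d_\pm(e_1,e_2)=\mathrm{len}\{x\in[0,l]:\exists y,\ \pm y\ge0,\ (x,y)\in e_2\}$ and $\mathrm{Ord}(e_1,e_2)=d_+-d_-$. Edges carry fixed canonical orientations; $\mathrm{Annot}_{\mathcal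 L}(C)=(C,A)$ with $A_{i,j}=\mathrm{Ord}(C(e_i),C(e_j))$. The space of noncrossing configurations is $\mathrm{NCConf}_0(\mathcal L)=\big(\mathrm{Conf}_0(\mathcal L)\times\mathbb R^{E\times E}\big)\cap\overline{\mathrm{Annot}_{\mathcal L}(\mathrm{NConf}_1(\mathcal L))}$, i.e. the set of limits, lying in $\mathrm{Conf}_0(\mathcal L)\times\mathbb R^{E\times E}$, of sequences of annotated nontouching configurations of linkages $1$-related to $\mathcal L$. *)

From Stdlib Require Import Reals Lra List Relations ClassicalEpsilon.
Import ListNotations.
Open Scope R_scope.

Definition pt := (R * R)%type.

Definition dist (p q : pt) : R :=
  sqrt ((fst p - fst q) ^ 2 + (snd p - snd q) ^ 2).

Definition on_seg (a b p : pt) : Prop :=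
  exists t, 0 <= t <= 1 /\
    p = (fst a + t * (fst b - fst a), snd a + t * (snd b - snd a)).

(* Vertices are 0 .. lnV-1; bars are the entries of the list ledges,
   bar k being oriented (canonically) from (fst e_k) to (snd e_k);
   llen k is the length of bar k. *)
Record linkage := mkLinkage {
  lnV : nat;
  ledges : list (nat * nat);
  llen : nat -> R
}.

Definition nE (L : linkage) : nat := length (ledges L).
Definition edge (L : linkage) (k : nat) : nat * nat := nth k (ledges L) (0%nat, 0%nat).

Definition wf_linkage (L : linkage) : Prop :=
  (forall k, (k < nE L)%nat ->
      (fst (edge L k) < lnV L)%nat /\ (snd (edge L k) < lnV L)%nat /\
      fst (edge L k) <> snd (edge L k) /\ 0 <= llen L k) /\
  (forall k l, (k < nE L)%nat -> (l < nE L)%nat -> k <> l ->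
      edge L k <> edge L l /\
      edge L k <> (snd (edge L l), fst (edge L l))).

(* same graph as L, lengths ell' (nonnegative), eps-close to those of L *)
Definition eps_related (eps : R) (L : linkage) (ell' : nat -> R) : Prop :=
  forall k, (k < nE L)%nat -> 0 <= ell' k /\ Rabs (ell' k - llen L k) <= eps.

Definition conf_lens (L : linkage) (ell : nat -> R) (C : nat -> pt) : Prop :=
  forall k, (k < nE L)%nat ->
    dist (C (fst (edge L k))) (C (snd (edge L k))) = ell k.

Definition Conf0 (L : linkage) (C : nat -> pt) : Prop := conf_lens L (llen L) C.

Definition zero_bar (L : linkage) (ell : nat -> R) (u v : nat) : Prop :=
  exists k, (k < nE L)%nat /\ ell k = 0 /\
    ((fst (edge L k) = u /\ snd (edge L k) = v) \/
     (fst (edge L k) = v /\ snd (edge L k) = u)).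

Definition zero_path (L : linkage) (ell : nat -> R) : relation nat :=
  clos_refl_trans nat (zero_bar L ell).

Definition bar_seg (L : linkage) (C : nat -> pt) (k : nat) (p : pt) : Prop :=
  on_seg (C (fst (edge L k))) (C (snd (edge L k))) p.

Definition is_endpoint (L : linkage) (C : nat -> pt) (k : nat) (p : pt) : Prop :=
  p = C (fst (edge L k)) \/ p = C (snd (edge L k)).

Definition nontouching (L : linkage) (ell : nat -> R) (C : nat -> pt) : Prop :=
  conf_lens L ell C /\
  (forall k l p, (k < nE L)%nat -> (l < nE L)%nat -> k <> l ->
     bar_seg L C k p -> bar_seg L C l p ->
     is_endpoint L C k p /\ is_endpoint L C l p) /\
  (forall u v, (u < lnV L)%nat -> (v < lnV L)%nat ->
     (C u = C v <-> zero_path L ell u v)).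

Definition NConf (eps : R) (L : linkage) (C : nat -> pt) : Prop :=
  exists ell', eps_related eps L ell' /\ nontouching L ell' C.

(* Lebesgue length of a subset S of R which is an interval
   (sandwiched between (a,b) and [a,b]); value unspecified otherwise. *)
Definition interval_length (S : R -> Prop) (l : R) : Prop :=
  ((forall x, ~ S x) /\ l = 0) \/
  (exists a b, a <= b /\ (forall x, a < x < b -> S x) /\
     (forall x, S x -> a <= x <= b) /\ l = b - a).

Definition len (S : R -> Prop) : R :=
  epsilon (inhabits 0) (fun l => interval_length S l).

(* coordinates in which the oriented segment P->Q runs from (0,0) to (l,0),
   l = |Q - P|  (orientation-preserving rigid motion) *)
Definition xcoord (P Q p : pt) : R :=
  ((fst p - fst P) * (fst Q - fst P) + (snd p - snd P) * (snd Q - snd P)) / dist P Q.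
Definition ycoord (P Q p : pt) : R :=
  ((fst Q - fst P) * (snd p - snd P) - (snd Q - snd P) * (fst p - fst P)) / dist P Q.

Definition d_plus (P Q P2 Q2 : pt) : R :=
  len (fun x => 0 <= x <= dist P Q /\
        exists p, on_seg P2 Q2 p /\ xcoord P Q p = x /\ 0 <= ycoord P Q p).
Definition d_minus (P Q P2 Q2 : pt) : R :=
  len (fun x => 0 <= x <= dist P Q /\
        exists p, on_seg P2 Q2 p /\ xcoord P Q p = x /\ ycoord P Q p <= 0).

Definition Ord (P Q P2 Q2 : pt) : R := d_plus P Q P2 Q2 - d_minus P Q P2 Q2.

(* points of (R^2)^V x R^{E x E}; only coordinates v < |V|, i,j < |E| matter *)
Definition aconf := ((nat -> pt) * (nat -> nat -> R))%type.

Definition annot_ok (L : linkage) (C : nat -> pt) (A : nat -> nat -> R) : Prop :=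
  forall i j, (i < nE L)%nat -> (j < nE L)%nat ->
    A i j = Ord (C (fst (edge L i))) (C (snd (edge L i)))
                (C (fst (edge L j))) (C (snd (edge L j))).

Definition AnnotNConf (eps : R) (L : linkage) (x : aconf) : Prop :=
  NConf eps L (fst x) /\ annot_ok L (fst x) (snd x).

(* topological closure in (R^2)^V x R^{E x E} (product topology) *)
Definition closure (L : linkage) (S : aconf -> Prop) (x : aconf) : Prop :=
  forall delta, 0 < delta -> exists y, S y /\
    (forall v, (v < lnV L)%nat ->
        Rabs (fst (fst x v) - fst (fst y v)) < delta /\
        Rabs (snd (fst x v) - snd (fst y v)) < delta) /\
    (forall i j, (i < nE L)%nat -> (j < nE L)%nat ->
        Rabs (snd x i j - snd y i j) < delta).

Definition NCConf_with (eps : R) (L : linkage) (x : aconf) : Prop :=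
  Conf0 L (fst x) /\ closure L (AnnotNConf eps L) x.

Definition NCConf0 (L : linkage) (x : aconf) : Prop := NCConf_with 1 L x.

(* Write x = (C, A) and, for a bar k, |C_k| for the length of the segment
   C places on k.  Two elementary observations drive the proof.
   (1) If x lies in the closure of Annot(NConf_eps), then every bar of C has
       |C_k| within eps of its prescribed length: the approximating
       configurations realise lengths eps-close to those of L, and bar
       lengths depend continuously (4-Lipschitz in the sup-norm of the
       coordinates) on the vertex positions.  Taking eps = 1/n for all n
       forces C to be an honest configuration of L.
   (2) Conversely, if C is an honest configuration of L lying in the closure
       of Annot(NConf_eps), then sufficiently close approximants have bar
       lengths within any prescribed eps' > 0 of those of L; so the
       approximants witness membership in the closure of Annot(NConf_eps'). *)

From Pilot Require Import Defs.
From Stdlib Require Import Reals Lra Lia.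
From Stdlib Require Rgeom.
Open Scope R_scope.
Local Notation dist := Defs.dist.

Lemma dist_euc_eq (p q : pt) :
  dist p q = Rgeom.dist_euc (fst p) (snd p) (fst q) (snd q).
Proof. unfold dist, Rgeom.dist_euc, Rsqr. f_equal. ring. Qed.

Lemma dist_triangle (p q r : pt) : dist p q <= dist p r + dist r q.
Proof. rewrite !dist_euc_eq. apply Rgeom.triangle. Qed.

Lemma dist_sym (p q : pt) : dist p q = dist q p.
Proof. unfold dist. f_equal. ring. Qed.

Lemma dist_le_l1 (p q : pt) :
  dist p q <= Rabs (fst p - fst q) + Rabs (snd p - snd q).
Proof.
  pose proof (Rabs_pos (fst p - fst q)); pose proof (Rabs_pos (snd p - snd q)).
  unfold dist.
  rewrite <- (sqrt_pow2 (Rabs (fst p - fst q) + Rabs (snd p - snd q))) by lra.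
  apply sqrt_le_1_alt.
  rewrite <- (pow2_abs (fst p - fst q)), <- (pow2_abs (snd p - snd q)).
  nra.
Qed.

Lemma dist_moved (a b a' b' : pt) (d : R) :
  Rabs (fst a - fst a') < d -> Rabs (snd a - snd a') < d ->
  Rabs (fst b - fst b') < d -> Rabs (snd b - snd b') < d ->
  Rabs (dist a b - dist a' b') < 4 * d.
Proof.
  intros Hax Hay Hbx Hby.
  pose proof (dist_le_l1 a a'); pose proof (dist_le_l1 b b').
  pose proof (dist_triangle a b a'); pose proof (dist_triangle a' b b').
  pose proof (dist_triangle a' b' a); pose proof (dist_triangle a b' b).
  rewrite (dist_sym b' b), (dist_sym a' a) in *.
  apply Rabs_def1; lra.
Qed.

Lemma Rabs_le_inv_INR_eq0 (r : R) :
  (forall n : nat, (1 <= n)%nat -> Rabs r <= 1 / INR n) -> r = 0.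
Proof.
  intros Hbound.
  destruct (Req_dec r 0) as [Hr | Hr]; [exact Hr | exfalso].
  pose proof (Rabs_pos_lt r Hr) as Hpos.
  destruct (archimed_cor1 (Rabs r) Hpos) as [N [HN HN1]].
  specialize (Hbound N HN1).
  unfold Rdiv in Hbound; rewrite Rmult_1_l in Hbound.
  lra.
Qed.

Lemma inv_INR_pos (n : nat) : (1 <= n)%nat -> 0 < 1 / INR n.
Proof.
  intros Hn.
  assert (0 < INR n) by (apply lt_0_INR; lia).
  unfold Rdiv; rewrite Rmult_1_l; apply Rinv_0_lt_compat; lra.
Qed.

Section Closures.

Variable L : linkage.
Hypothesis HL : wf_linkage L.

Definition bar_length (C : nat -> pt) (k : nat) : R :=
  dist (C (fst (edge L k))) (C (snd (edge L k))).

Lemma bar_length_moved (C C' : nat -> pt) (d : R) (k : nat) :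
  (k < nE L)%nat ->
  (forall v, (v < lnV L)%nat ->
     Rabs (fst (C v) - fst (C' v)) < d /\ Rabs (snd (C v) - snd (C' v)) < d) ->
  Rabs (bar_length C k - bar_length C' k) < 4 * d.
Proof.
  intros Hk Hclose.
  destruct (proj1 HL k Hk) as [Hu [Hv _]].
  destruct (Hclose _ Hu) as [Hux Huy]; destruct (Hclose _ Hv) as [Hvx Hvy].
  exact (dist_moved _ _ _ _ _ Hux Huy Hvx Hvy).
Qed.

Lemma closure_bar_length_near (eps : R) (x : aconf) (k : nat) :
  (k < nE L)%nat -> closure L (AnnotNConf eps L) x ->
  Rabs (bar_length (fst x) k - llen L k) <= eps.
Proof.
  intros Hk Hcl.
  apply le_epsilon; intros e He.
  assert (Hd : 0 < e / 4) by lra.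
  destruct (Hcl _ Hd) as [y [[[ell [Hrel [Hlens _]]] _] [Hclose _]]].
  pose proof (bar_length_moved (fst x) (fst y) (e / 4) k Hk Hclose) as Hmove.
  assert (Hy : bar_length (fst y) k = ell k) by exact (Hlens k Hk).
  destruct (Hrel k Hk) as [_ Hell].
  rewrite Hy in Hmove.
  pose proof (Rabs_triang (bar_length (fst x) k - ell k) (ell k - llen L k)).
  replace (bar_length (fst x) k - ell k + (ell k - llen L k))
    with (bar_length (fst x) k - llen L k) in * by ring.
  lra.
Qed.

Lemma conf0_of_all_closures (x : aconf) :
  (forall n : nat, (1 <= n)%nat -> closure L (AnnotNConf (1 / INR n) L) x) ->
  Conf0 L (fst x).
Proof.
  intros Hcl k Hk.
  assert (Heq : bar_length (fst x) k - llen L k = 0).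
  { apply Rabs_le_inv_INR_eq0; intros n Hn.
    exact (closure_bar_length_near _ x k Hk (Hcl n Hn)). }
  unfold bar_length in Heq; lra.
Qed.

Lemma closure_change_tolerance (eps eps' : R) (x : aconf) :
  0 < eps' -> Conf0 L (fst x) ->
  closure L (AnnotNConf eps L) x -> closure L (AnnotNConf eps' L) x.
Proof.
  intros Heps' Hconf Hcl delta Hdelta.
  assert (Hd : 0 < Rmin delta (eps' / 4)) by (apply Rmin_glb_lt; lra).
  pose proof (Rmin_l delta (eps' / 4)); pose proof (Rmin_r delta (eps' / 4)).
  destruct (Hcl _ Hd) as [y [[[ell [Hrel Hnt]] Hann] [Hclose Hmat]]].
  exists y; split; [split; [exists ell; split; [| exact Hnt] | exact Hann] | split].
  - intros k Hk; split; [apply (Hrel k Hk) |].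
    pose proof (bar_length_moved (fst x) (fst y) _ k Hk Hclose) as Hmove.
    assert (Hy : bar_length (fst y) k = ell k) by exact (proj1 Hnt k Hk).
    assert (Hx : bar_length (fst x) k = llen L k) by exact (Hconf k Hk).
    rewrite Hx, Hy, Rabs_minus_sym in Hmove.
    lra.
  - intros v Hv; destruct (Hclose v Hv); split; lra.
  - intros i j Hi Hj; pose proof (Hmat i j Hi Hj); lra.
Qed.

End Closures.

Theorem mainTheorem3 (L : linkage) (HL : wf_linkage L) :
  (forall x : aconf,
     NCConf0 L x <->
     (forall n : nat, (1 <= n)%nat -> closure L (AnnotNConf (1 / INR n) L) x)) /\
  (forall eps : R, 0 < eps -> forall x : aconf,
     NCConf_with eps L x <-> NCConf0 L x).
Proof.
  split.
  - intros x; split.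
    + intros [Hconf Hcl] n Hn.
      exact (closure_change_tolerance L HL 1 _ x (inv_INR_pos n Hn) Hconf Hcl).
    + intros Hcl; split; [exact (conf0_of_all_closures L HL x Hcl) |].
      replace 1 with (1 / INR 1) by (simpl; field).
      exact (Hcl 1%nat (le_n 1)).
  - intros eps Heps x; split; intros [Hconf Hcl]; split; try exact Hconf.
    + exact (closure_change_tolerance L HL eps 1 x Rlt_0_1 Hconf Hcl).
    + exact (closure_change_tolerance L HL 1 eps x Heps Hconf Hcl).
Qed.
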